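(* Let $\lambda, v, u$ be positive integers and let $M=m_1,m_2,\ldots,m_t$ be a sequence of integers with $m_1\leq m_2\leq\cdots\leq m_t$ and $m_i\equiv 0\pmod{2}$ for all $i\in\{1,2,\ldots,t\}$. If there exists an $(M)$-cycle decomposition of $\lambda K_{v,u}$, then all of the following hold: (a) $m_t\leq 2\min(\{v,u\})$; (b) $\lambda v\equiv \lambda u\equiv 0\pmod{2}$; (c) $t\leq \frac{\lambda}{2}vu-m_t+2$ if $\lambda$ is even; (d) $2\nu_2(M)\leq (\lambda-1)vu$ if $\lambda$ is odd.
   Context: $\lambda K_{v,u}$ denotes the multigraph with vertex set $V\cup U$, where $V,U$ are disjoint, $|V|=v$, $|U|=u$, in which every $x\in V$ and $y\in U$ are joined by exactly $\lambda$ parallel edges and there are no other edges. For $m\geq 2$, an $m$-cycle is a subgraph consisting of $m$ distinct vertices $x_0,\ldots,x_{m-1}$ and one edge joining $x_i$ and $x_{i+1}$ for each $i$ (indices mod $m$); in particular a $2$-cycle consists of two parallel edges between two vertices. An $(M)$-cycle decomposition of a multigraph $G$, for $M=m_1,\ldots,m_t$, is a partition of the edge set of $G$ into $t$ cycles of lengths $m_1,\ldots,m_t$ respectively. $\nu_k(M)$ denotes the number of indices $i$ with $m_i=k$. *)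

From mathcomp Require Import all_boot.
Set Implicit Arguments. Unset Strict Implicit. Unset Printing Implicit Defensive.

(* The multigraph lambda K_{v,u}: vertex set V + U with V = 'I_v, U = 'I_u;
   edges are triples (x, y, k) with x in V, y in U, k in 'I_lam
   (the lam parallel edges joining x and y). *)
Definition vtx (v u : nat) := ('I_v + 'I_u)%type.
Definition edge (v u lam : nat) := ('I_v * 'I_u * 'I_lam)%type.

Definition joins (v u lam : nat) (e : edge v u lam) (a b : vtx v u) : bool :=
  ((a == inl e.1.1) && (b == inr e.1.2)) || ((a == inr e.1.2) && (b == inl e.1.1)).

Definition is_cycle (v u lam m : nat) (C : {set edge v u lam}) : Prop :=
  2 <= m /\
  exists (x : 'I_m -> vtx v u) (e : 'I_m -> edge v u lam),
    injective x /\ injective e /\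
    (forall i : 'I_m, joins (e i) (x i) (x (ordS i))) /\
    C = [set e i | i : 'I_m].

Definition cycle_decomposition (v u lam : nat) (M : seq nat) : Prop :=
  exists C : 'I_(size M) -> {set edge v u lam},
    (forall i j, i != j -> [disjoint C i & C j]) /\
    (forall e : edge v u lam, exists i, e \in C i) /\
    (forall i : 'I_(size M), is_cycle (nth 0 M i) (C i)).

Definition nu (k : nat) (M : seq nat) : nat := count (pred1 k) M.

(* (a) A cycle of lambda K_{v,u} alternates between the two sides and has no
   repeated vertex, so it has length at most 2 min(v, u).  (b) Each vertex has
   even degree in each cycle, so the degrees lambda u and lambda v are even.
   (d) The two edges of a 2-cycle are parallel; for lambda odd, at most
   (lambda - 1)/2 of the 2-cycles use a given pair of vertices.
   (c) Reduce mod 2: let P_i be the set of pairs covered an odd number of times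
   by the i-th cycle, i.e. its edge set if m_i > 2 and the empty set if m_i = 2.
   Every P_i is an even subgraph of K_{v,u}, and for lambda even the sum of all
   P_i over GF(2) vanishes, so the longest cycle P_t is the sum of the others.
   A minimal subfamily K with sum P_t is linearly independent, and stays so
   modulo the path P_t minus one edge, which contains no nonempty even subgraph;
   hence |K| + m_t - 1 <= |U| for the union U of K.  Pairs of U outside P_t are
   covered twice, so 2|U| <= sum_K m_i + m_t; together with m_i >= 2 for the
   remaining cycles and sum_i m_i = lambda v u this gives t + m_t <= lambda v u/2 + 2. *)

From mathcomp Require Import all_boot zify.
Set Implicit Arguments. Unset Strict Implicit. Unset Printing Implicit Defensive.

Lemma sum_mem_card (T : finType) (A : {pred T}) : \sum_x (x \in A : nat) = #|A|.
Proof. by rewrite -sum1_card [RHS]big_mkcond; apply: eq_bigr => x _; case: (x \in A). Qed.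

Lemma odd_sum (I : finType) (A : {pred I}) (f : I -> nat) :
  odd (\sum_(i in A) f i) = odd #|[set i in A | odd (f i)]|.
Proof.
rewrite -sum_mem_card !(big_morph odd oddD (erefl (odd 0))) big_mkcond /=.
by apply: eq_bigr => i _; rewrite inE; case: (i \in A); rewrite //= oddb.
Qed.

Lemma even_sum (I : finType) (P : pred I) (f : I -> nat) :
  (forall i, P i -> ~~ odd (f i)) -> ~~ odd (\sum_(i | P i) f i).
Proof.
move=> evenf; apply: (big_ind (fun k => ~~ odd k)) => // a b.
by rewrite oddD => /negbTE-> /negbTE->.
Qed.

Lemma card_partitionI (I T : finType) (C : I -> {set T}) (A : {set T}) :
  (forall i j, i != j -> [disjoint C i & C j]) -> (forall x, exists i, x \in C i) ->
  #|A| = \sum_i #|A :&: C i|.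
Proof.
move=> disjC coverC; rewrite -sum_mem_card.
under [RHS]eq_bigr => i _ do rewrite -sum_mem_card.
rewrite exchange_big /=; apply: eq_bigr => x _.
have [i xCi] := coverC x; rewrite (bigD1 i) //= big1 => [|j ji].
  by rewrite inE xCi andbT addn0.
by rewrite inE (disjointFr (disjC i j _) xCi) ?andbF // eq_sym.
Qed.

Lemma card_preimsetI (T T' : finType) (f : T -> T') (D : {set T}) (A : {set T'}) :
  #|D :&: f @^-1: A| = \sum_(y in A) #|D :&: f @^-1: [set y]|.
Proof.
rewrite -sum1_card (partition_big f (mem A)) => [|x]; last by rewrite !inE => /andP[].
apply: eq_bigr => y yA; rewrite -sum1_card; apply: eq_bigl => x.
by rewrite !inE; case: (f x =P y) => [->|]; rewrite ?(yA : y \in A) ?andbT ?andbF.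
Qed.

Lemma card_preimset_fst (T1 T2 : finType) (A : {set T1}) :
  #|(@fst T1 T2) @^-1: A| = #|A| * #|T2|.
Proof. by rewrite -cardsT -cardsX; apply: eq_card => -[x y]; rewrite !inE andbT. Qed.

Lemma card_sep (I : finType) (S : {pred I}) (Q : pred I) :
  #|[set i in S | Q i]| = \sum_(i in S) (Q i : nat).
Proof.
rewrite -sum_mem_card [RHS]big_mkcond; apply: eq_bigr => i _.
by rewrite inE; case: (i \in S).
Qed.

Lemma double_count (I T : finType) (S : {pred I}) (B : {set T}) (P : I -> {set T}) :
  \sum_(x in B) #|[set i in S | x \in P i]| = \sum_(i in S) #|P i :&: B|.
Proof.
under eq_bigr do rewrite card_sep; rewrite exchange_big; apply: eq_bigr => i _.
by rewrite -card_sep; apply: eq_card => x; rewrite !inE andbC.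
Qed.

Lemma card_imsetTI (I T : finType) (f : I -> T) (B : {set T}) :
  injective f -> #|[set f i | i : I] :&: B| = #|f @^-1: B|.
Proof.
move=> finj; rewrite -(card_imset _ finj); apply: eq_card => y; rewrite !inE.
apply/andP/imsetP => [[/imsetP[i _ ->] fiB] | [i fiB ->]]; first by exists i; rewrite ?inE.
by split; [apply: imset_f | rewrite inE in fiB].
Qed.

Section SymmetricDifference.
Variable T : finType.
Implicit Types A B : {set T}.

Definition symdiff A B : {set T} := [set x | (x \in A) (+) (x \in B)].

Lemma in_symdiff A B x : (x \in symdiff A B) = (x \in A) (+) (x \in B).
Proof. by rewrite inE. Qed.

Lemma symdiff_eq0 A B : symdiff A B = set0 -> A = B.
Proof.
move/setP=> AB; apply/setP => x; move: (AB x).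
by rewrite !inE; case: (x \in A); case: (x \in B).
Qed.

Lemma odd_card_symdiff A B : odd #|symdiff A B| = odd #|A| (+) odd #|B|.
Proof.
have sAB : symdiff A B = (A :|: B) :\: (A :&: B).
  by apply/setP => x; rewrite !inE; case: (x \in A); case: (x \in B).
have IAB : (A :|: B) :&: (A :&: B) = A :&: B by apply/setIidPr; rewrite subIset ?subsetUl.
move: (cardsUI A B); rewrite -(cardsID (A :&: B) (A :|: B)) IAB -sAB.
by move/(congr1 odd); rewrite !oddD addbC addbA addbb.
Qed.

End SymmetricDifference.

Section XorSum.
Variables (I T : finType) (P : I -> {set T}).
Implicit Types (S J K : {set I}) (A Q X : {set T}).

Definition xorsum S : {set T} := [set x | odd #|[set i in S | x \in P i]|].

Lemma odd_card_xorsumI S A : odd #|xorsum S :&: A| = odd (\sum_(i in S) #|P i :&: A|).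
Proof.
rewrite -double_count odd_sum; congr odd; apply: eq_card => x.
by rewrite !inE andbC.
Qed.

Lemma xorsum1 s : xorsum [set s] = P s.
Proof.
apply/setP => x; rewrite inE.
have -> : [set i in [set s] | x \in P i] = if x \in P s then [set s] else set0.
  apply/setP => i; case: (boolP (x \in P s)) => xPs; rewrite !inE.
    by case: eqP => [->|].
  by case: eqP => [->|]; rewrite ?(negbTE xPs).
by case: (x \in P s); rewrite ?cards1 ?cards0.
Qed.

Lemma xorsum_symdiff S1 S2 : xorsum (symdiff S1 S2) = symdiff (xorsum S1) (xorsum S2).
Proof.
apply/setP => x; rewrite !inE -odd_card_symdiff; congr odd; apply: eq_card => i.
by rewrite !inE; case: (i \in S1); case: (i \in S2); case: (x \in P i).
Qed.

Lemma xorsum_sub S : xorsum S \subset \bigcup_(i in S) P i.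
Proof.
apply/subsetP => x; rewrite inE => /odd_gt0/card_gt0P[i]; rewrite inE => /andP[iS xPi].
by apply/bigcupP; exists i.
Qed.

Lemma card_bigcup_xorsum S :
  2 * #|\bigcup_(i in S) P i| <= \sum_(i in S) #|P i| + #|xorsum S|.
Proof.
have -> : \sum_(i in S) #|P i| = \sum_(x in [set: T]) #|[set i in S | x \in P i]|.
  by rewrite double_count; apply: eq_bigr => i _; rewrite setIT.
rewrite -!sum_mem_card big_distrr (eq_bigl _ _ (@in_setT T)) -big_split /=.
apply: leq_sum => x _; rewrite inE.
case: (boolP (x \in _)) => [/bigcupP[i iS xPi] | _] //=.
have : 0 < #|[set i in S | x \in P i]| by apply/card_gt0P; exists i; rewrite inE iS.
case: #|_| => // -[|k] _ //=; lia.
Qed.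

Lemma xorsum_min_free J X :
  xorsum J = X -> (forall K, K \subset J -> xorsum K = X -> #|J| <= #|K|) ->
  forall S, S \subset J -> xorsum S = set0 -> S = set0.
Proof.
move=> sumJ minJ S sSJ sumS0; apply/eqP; rewrite -cards_eq0.
have JS : J :\: S = symdiff J S.
  apply/setP => i; rewrite !inE.
  by case: (boolP (i \in S)) => [/(subsetP sSJ)->|_] //=; rewrite addbF.
have sumJS : xorsum (J :\: S) = X.
  rewrite JS xorsum_symdiff sumJ sumS0; apply/setP => x; rewrite !inE.
  by rewrite addbF.
have := minJ _ (subsetDl J S) sumJS; have := cardsID S J.
by rewrite (setIidPr sSJ); lia.
Qed.

Lemma card_xorsum_avoiding J Q :
  (forall S, S \subset J -> xorsum S \subset Q -> S = set0) ->
  Q \subset \bigcup_(i in J) P i -> #|J| + #|Q| <= #|\bigcup_(i in J) P i|.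
Proof.
set U := \bigcup_(i in J) P i => freeJQ sQU.
(* S |-> xorsum S :\: Q embeds the subsets of J into those of U :\: Q. *)
have inj : {in powerset J &, injective (fun S => xorsum S :\: Q)}.
  move=> S1 S2; rewrite !powersetE => sS1 sS2 /setP eqS; apply: symdiff_eq0.
  apply: freeJQ.
    apply/subsetP => i; rewrite in_symdiff.
    by case: (boolP (i \in S1)) => [/(subsetP sS1)|_ /(subsetP sS2)].
  apply/subsetP => x; rewrite xorsum_symdiff in_symdiff.
  by move: (eqS x); rewrite !in_setD; case: (x \in Q) => //= ->; rewrite addbb.
have sub : [set xorsum S :\: Q | S in powerset J] \subset powerset (U :\: Q).
  apply/subsetP => Z /imsetP[S]; rewrite powersetE => sSJ ->; rewrite powersetE.
  apply: setSD; apply: subset_trans (xorsum_sub S) _.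
  by apply/bigcupsP => i iS; apply: bigcup_sup; apply: (subsetP sSJ).
have := subset_leq_card sub; rewrite (card_in_imset inj) !card_powerset leq_exp2l //.
by have := cardsID Q U; rewrite (setIidPr sQU); lia.
Qed.

Lemma xorsum_subfamily_bound J X Q :
  xorsum J = X -> Q \subset X ->
  (forall S, S \subset J -> xorsum S \subset Q -> xorsum S = set0) ->
  exists2 K : {set I}, K \subset J & 2 * (#|K| + #|Q|) <= \sum_(i in K) #|P i| + #|X|.
Proof.
move=> sumJ sQX evenQ.
pose achieves (K : {set I}) := (K \subset J) && (xorsum K == X).
have achJ : achieves J by rewrite /achieves subxx sumJ eqxx.
case: (arg_minnP (fun K : {set I} => #|K|) achJ) => K /andP[sKJ /eqP sumK] minK.
exists K => //.
have freeK : forall S, S \subset K -> xorsum S \subset Q -> S = set0.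
  move=> S sSK sumSQ; apply: (xorsum_min_free sumK) => //.
    move=> K' sK'K sumK'; apply: minK.
    by rewrite /achieves (subset_trans sK'K sKJ) sumK' eqxx.
  exact: evenQ (subset_trans sSK sKJ) sumSQ.
have := card_xorsum_avoiding freeK (subset_trans sQX _).
rewrite -sumK xorsum_sub => /(_ isT).
have := card_bigcup_xorsum K; rewrite sumK; lia.
Qed.

End XorSum.

Lemma val_ordS m (i : 'I_m) : nat_of_ord (ordS i) = if i.+1 == m then 0 else i.+1.
Proof.
rewrite /=; have := ltn_ord i; rewrite leq_eqVlt => /orP[/eqP->|lt_im].
  by rewrite eqxx modnn.
by rewrite modn_small // (ltn_eqF lt_im).
Qed.

Lemma ordS_neq m (i : 'I_m) : 1 < m -> ordS i != i.
Proof.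
move=> m_gt1; apply/eqP => /(congr1 (@nat_of_ord m)); rewrite val_ordS.
by have := ltn_ord i; case: eqP; lia.
Qed.

Lemma ordS2_neq m (i : 'I_m) : 2 < m -> ordS (ordS i) != i.
Proof.
move=> m_gt2; apply/eqP => /(congr1 (@nat_of_ord m)); rewrite !val_ordS; have := ltn_ord i.
by case: eqP => /=; case: eqP; lia.
Qed.

Lemma alternating_cycle_le (T : finType) (A : {pred T}) m (x : 'I_m -> T) :
  injective x -> (forall i, (x i \in A) || (x (ordS i) \in A)) -> m <= 2 * #|A|.
Proof.
move=> xinj xA.
have card_in_A (f : 'I_m -> T) : injective f -> #|[set i | f i \in A]| <= #|A|.
  move=> finj; rewrite -(card_imset _ finj); apply/subset_leq_card/subsetP.
  by move=> y /imsetP[i]; rewrite inE => fiA ->.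
have : ~: [set i | x i \in A] \subset [set i | x (ordS i) \in A].
  by apply/subsetP => i; rewrite !inE; case/orP: (xA i) => ->.
move/subset_leq_card; have := card_in_A _ (inj_comp xinj (@ordS_inj m)).
have := card_in_A _ xinj; have := cardsC [set i | x i \in A]; rewrite card_ord /=; lia.
Qed.

Section CompleteBipartite.
Variables v u lam : nat.
Local Notation V := (vtx v u).
Local Notation Pr := ('I_v * 'I_u)%type.
Local Notation E := (edge v u lam).
Implicit Types (w : V) (p : Pr) (e f : E) (A : {set Pr}) (C D : {set E}).

Definition incident w p : bool := (w == inl p.1) || (w == inr p.2).

Definition star w : {set Pr} := [set p | incident w p].

(* For the edge set of a cycle this is its set of pairs if the length
   exceeds 2, and empty for a 2-cycle. *)
Definition odd_pairs D : {set Pr} := [set p | odd #|D :&: fst @^-1: [set p]|].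

Lemma joins_incident e a b w : joins e a b -> incident w e.1 = (w == a) || (w == b).
Proof. by rewrite /joins /incident; case/orP => /andP[/eqP-> /eqP->] //; rewrite orbC. Qed.

Lemma joins_fst e f a b : joins e a b -> joins f b a -> e.1 = f.1.
Proof.
case: e f => [[x y] k] [[x' y'] k'].
rewrite /joins /= => /orP[] /andP[/eqP-> /eqP->] /orP[] /andP[/eqP ? /eqP ?]; congruence.
Qed.

Lemma card_star_inl (a : 'I_v) : #|star (inl a)| = u.
Proof.
transitivity #|setX [set a] [set: 'I_u]|; last by rewrite cardsX cards1 cardsT card_ord mul1n.
by apply: eq_card => -[x y]; rewrite !inE /incident /= orbF eq_sym (inj_eq inl_inj) andbT.
Qed.

Lemma card_star_inr (b : 'I_u) : #|star (inr b)| = v.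
Proof.
transitivity #|setX [set: 'I_v] [set b]|; last by rewrite cardsX cards1 cardsT card_ord muln1.
by apply: eq_card => -[x y]; rewrite !inE /incident /= (inj_eq inr_inj) eq_sym.
Qed.

Lemma odd_card_odd_pairsI D A : odd #|odd_pairs D :&: A| = odd #|D :&: fst @^-1: A|.
Proof.
by rewrite card_preimsetI odd_sum; congr odd; apply: eq_card => p; rewrite !inE andbC.
Qed.

Lemma odd_pairs_sub D : odd_pairs D \subset fst @: D.
Proof.
apply/subsetP => p; rewrite inE => /odd_gt0/card_gt0P[e].
by rewrite !inE => /andP[eD /eqP <-]; apply: imset_f.
Qed.

Lemma odd_pairs_inj D : {in D &, injective fst} -> odd_pairs D = fst @: D.
Proof.
move=> fst_inj; apply/eqP; rewrite eqEsubset odd_pairs_sub.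
apply/subsetP => _ /imsetP[e eD ->]; rewrite inE (_ : _ :&: _ = [set e]) ?cards1 //.
apply/setP => f; rewrite !inE; apply/andP/eqP => [[fD /eqP]|->]; last by rewrite eD.
exact: fst_inj.
Qed.

Lemma cycle_card m C : is_cycle m C -> #|C| = m.
Proof. by case=> _ [x [e [_ [einj [_ ->]]]]]; rewrite card_imset // card_ord. Qed.

Lemma cycle_even_degree m C w : is_cycle m C -> ~~ odd #|C :&: fst @^-1: star w|.
Proof.
case=> m_gt1 [x [e [xinj [einj [xe ->]]]]]; rewrite card_imsetTI //.
set X := [set i | w == x i].
have -> : e @^-1: (fst @^-1: star w) = X :|: @ordS m @^-1: X.
  by apply/setP => i; rewrite !inE (joins_incident _ (xe i)).
rewrite cardsU card_preimset; last exact: ordS_inj.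
rewrite (_ : X :&: _ = set0) ?cards0 ?subn0 ?addnn ?odd_double //.
apply/setP => i; rewrite !inE; apply/negP => /andP[/eqP wx /eqP wxS].
by have := ordS_neq i m_gt1; rewrite (xinj _ _ (etrans (esym wxS) wx)) eqxx.
Qed.

Lemma cycle_fst_inj m C : is_cycle m C -> 2 < m -> {in C &, injective fst}.
Proof.
case=> _ [x [e [xinj [_ [xe ->]]]]] m_gt2 _ _ /imsetP[i _ ->] /imsetP[j _ ->] eij.
have ends w : (w == x i) || (w == x (ordS i)) = (w == x j) || (w == x (ordS j)).
  by rewrite -(joins_incident _ (xe i)) -(joins_incident _ (xe j)) eij.
move: (ends (x i)); rewrite eqxx => /esym/orP[/eqP/xinj-> // | /eqP/xinj iSj].
move: (ends (x j)); rewrite eqxx /= => /orP[/eqP/xinj-> // | /eqP/xinj jSi].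
by have := ordS2_neq i m_gt2; rewrite -jSi -iSj eqxx.
Qed.

Lemma cycle_length_le m C : is_cycle m C -> m <= 2 * minn v u.
Proof.
case=> _ [x [e [xinj [_ [xe _]]]]].
have le_v : m <= 2 * #|[set inl a | a : 'I_v] : {set V}|.
  apply: alternating_cycle_le xinj _ => i.
  by case/orP: (xe i) => /andP[/eqP-> /eqP->]; rewrite imset_f ?orbT.
have le_u : m <= 2 * #|[set inr b | b : 'I_u] : {set V}|.
  apply: alternating_cycle_le xinj _ => i.
  by case/orP: (xe i) => /andP[/eqP-> /eqP->]; rewrite imset_f ?orbT.
move: le_v le_u; rewrite !card_imset ?cardsT ?card_ord; [lia | exact: inr_inj | exact: inl_inj].
Qed.

Lemma cycle2_bundle_even C p : is_cycle 2 C -> ~~ odd #|C :&: fst @^-1: [set p]|.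
Proof.
move=> C2; have C_fst : {in C &, forall e f, e.1 = f.1}.
  case: C2 => _ [x [e [_ [_ [xe ->]]]]] _ _ /imsetP[i _ ->] /imsetP[j _ ->].
  have [->//|ij] := eqVneq i j.
  have other (k l : 'I_2) : k != l -> l = ordS k.
    by move=> kl; apply: ord_inj; rewrite val_ordS; case: k l kl => -[|[|k]] hk [[|[|l]] hl].
  have jSi := other i j ij; have iSj : i = ordS j by apply: other; rewrite eq_sym.
  by apply: joins_fst (xe i) _; rewrite -jSi iSj; apply: xe.
case: (set_0Vmem (C :&: fst @^-1: [set p])) => [->|[e]]; first by rewrite cards0.
rewrite !inE => /andP[eC /eqP ep].
rewrite (_ : C :&: _ = C) ?(cycle_card C2) //; apply/setIidPl/subsetP => f fC.
by rewrite !inE (C_fst f e) ?ep.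
Qed.

Lemma cycle_path_free m C : is_cycle m C -> 2 < m ->
  exists2 q, q \in fst @: C & forall Z : {set Pr}, Z \subset (fst @: C) :\ q ->
    (forall w, ~~ odd #|Z :&: star w|) -> Z = set0.
Proof.
case=> _ [x [e [xinj [_ [xe ->]]]]] m_gt2.
(* q is the pair of the last edge; if Z is nonempty, the first vertex of its
   edge of least index has degree 1 in Z. *)
pose i0 : 'I_m := Ordinal (ltnW (ltnW m_gt2)).
exists (e (ord_pred i0)).1; first by apply: imset_f; apply: imset_f.
move=> Z sZ evenZ; case: (set_0Vmem Z) => [// | [p pZ]]; exfalso.
have ZinC q : q \in Z -> exists2 k, q = (e k).1 & k != ord_pred i0.
  move/(subsetP sZ); rewrite !inE => /andP[qq0 /imsetP[_ /imsetP[k _ ->] qk]].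
  by rewrite qk in qq0 *; exists k => //; apply: contraNneq qq0 => ->.
have [k0 pk0 _] := ZinC p pZ; rewrite pk0 in pZ.
case: (@arg_minnP _ k0 (fun k => (e k).1 \in Z) (@nat_of_ord m) pZ) => j Zj minj.
have Zxj : Z :&: star (x j) = [set (e j).1].
  apply/setP => q; rewrite !inE; apply/andP/eqP => [[qZ] | ->]; last first.
    by rewrite Zj (joins_incident _ (xe j)) eqxx.
  have [k qk kq0] := ZinC q qZ; rewrite qk in qZ *.
  rewrite (joins_incident _ (xe k)) => /orP[/eqP/xinj-> // | /eqP/xinj jSk].
  have [j0 | j_gt0] := posnP j.
    move: kq0; rewrite -(ordSK k) -jSk (_ : j = i0) ?eqxx //; exact: ord_inj.
  have := minj k qZ; move: j_gt0; rewrite jSk val_ordS; case: eqP => /=; lia.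
by have := evenZ (x j); rewrite Zxj cards1.
Qed.

End CompleteBipartite.

Section Decomposition.
Variables (v u lam : nat) (M : seq nat).
Local Notation n := (size M).
Local Notation len i := (nth 0 M (nat_of_ord i)).
Variable C : 'I_n -> {set edge v u lam}.
Hypotheses (disjC : forall i j, i != j -> [disjoint C i & C j])
  (coverC : forall e, exists i, e \in C i)
  (cycleC : forall i, is_cycle (len i) (C i)).

Lemma sum_len : \sum_(i < n) len i = lam * v * u.
Proof.
transitivity #|[set: edge v u lam]|; last by rewrite cardsT !card_prod !card_ord mulnC mulnA.
rewrite (card_partitionI _ disjC coverC); apply: eq_bigr => i _.
by rewrite setTI (cycle_card (cycleC i)).
Qed.

Lemma sum_len_ge2 (A : {set 'I_n}) : 2 * #|A| <= \sum_(i in A) len i.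
Proof. by rewrite mulnC -sum_nat_const; apply: leq_sum => i _; case: (cycleC i). Qed.

Lemma even_degree (w : vtx v u) : ~~ odd (lam * #|star w|).
Proof.
rewrite mulnC -[lam in X in odd X]card_ord -card_preimset_fst (card_partitionI _ disjC coverC).
by apply: even_sum => i _; rewrite setIC; apply: cycle_even_degree (cycleC i).
Qed.

Lemma two_cycles_at_pair (p : 'I_v * 'I_u) : odd lam ->
  \sum_(i : 'I_n | len i == 2) #|C i :&: fst @^-1: [set p]| <= lam - 1.
Proof.
move=> lam_odd.
have le_lam : \sum_(i : 'I_n | len i == 2) #|C i :&: fst @^-1: [set p]| <= lam.
  have card_bundle : #|fst @^-1: [set p] : {set edge v u lam}| = lam.
    by rewrite card_preimset_fst cards1 mul1n card_ord.
  rewrite -[X in _ <= X]card_bundle (card_partitionI _ disjC coverC).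
  rewrite [X in _ <= X](bigID (fun i => len i == 2)) /=; apply: leq_trans (leq_addr _ _).
  by apply: leq_sum => i _; rewrite setIC.
have even : ~~ odd (\sum_(i : 'I_n | len i == 2) #|C i :&: fst @^-1: [set p]|).
  by apply: even_sum => i /eqP len2; apply: cycle2_bundle_even; rewrite -len2.
move: le_lam; rewrite leq_eqVlt => /orP[/eqP eq_lam | ]; last by lia.
by rewrite eq_lam lam_odd in even.
Qed.

Lemma nu2_bound : odd lam -> 2 * nu 2 M <= (lam - 1) * v * u.
Proof.
move=> lam_odd.
have -> : 2 * nu 2 M = \sum_p \sum_(i : 'I_n | len i == 2) #|C i :&: fst @^-1: [set p]|.
  rewrite exchange_big /nu -sum1_count (big_nth 0) big_mkord big_distrr /=.
  apply: eq_bigr => i /eqP len2; rewrite muln1 -len2 -(cycle_card (cycleC i)).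
  rewrite -[C i in LHS]setIT -(preimsetT fst) card_preimsetI.
  by apply: eq_bigl => p; rewrite inE.
apply: (@leq_trans (\sum_(p : 'I_v * 'I_u) (lam - 1))).
  exact: leq_sum (fun p _ => two_cycles_at_pair p lam_odd).
by rewrite sum_nat_cond_const cardsT card_prod !card_ord mulnC mulnA.
Qed.

Local Notation parity := (fun i => odd_pairs (C i)).

Lemma xorsum_parity_even (S : {set 'I_n}) (w : vtx v u) : ~~ odd #|xorsum parity S :&: star w|.
Proof.
rewrite odd_card_xorsumI; apply: even_sum => i _.
by rewrite odd_card_odd_pairsI; apply: cycle_even_degree (cycleC i).
Qed.

Lemma xorsum_parity_setC1 (s : 'I_n) : ~~ odd lam -> xorsum parity [set~ s] = parity s.
Proof.
move=> lam_even; apply: symdiff_eq0.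
rewrite -(xorsum1 parity s) -xorsum_symdiff; apply/setP => p; rewrite !inE.
have -> : [set i in symdiff [set~ s] [set s] | p \in odd_pairs (C i)] =
          [set i in [set: 'I_n] | odd #|fst @^-1: [set p] :&: C i|].
  by apply/setP => i; rewrite !inE setIC; case: eqP.
rewrite -odd_sum (eq_bigl _ _ (@in_setT _)) -(card_partitionI _ disjC coverC).
by rewrite card_preimset_fst cards1 mul1n card_ord; apply: negbTE.
Qed.

Lemma sum_len_outside (K : {set 'I_n}) (s : 'I_n) : s \notin K ->
  2 * (n - #|K| - 1) + len s + \sum_(i in K) len i <= lam * v * u.
Proof.
move=> sK; have sCK : s \in ~: K by rewrite inE.
rewrite -sum_len -(eq_bigl _ _ (@in_setT _)) [X in _ <= X](big_setID K) setTI setTD.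
rewrite (big_setD1 _ sCK) /=.
have := sum_len_ge2 (~: K :\ s); have := cardsC K.
rewrite (cardsD1 s (~: K)) sCK card_ord /=.
(* the copies of these terms differ up to conversion, which [lia] cannot see *)
by move: (\sum_(i in K) _) (\sum_(i in _ :\ s) _) #|K| #|_ :\ s| => a b k r; lia.
Qed.

Lemma size_add_len_le (s : 'I_n) : ~~ odd lam -> n + len s <= lam %/ 2 * v * u + 2.
Proof.
move=> lam_even.
have lamvu : lam * v * u = 2 * (lam %/ 2 * v * u).
  by rewrite !mulnA [2 * _]mulnC divnK // dvdn2.
move: (lam %/ 2 * v * u) lamvu => N lamvu.
have len_ge2 : 2 <= len s by case: (cycleC s).
case: (leqP (len s) 2) => [len_le2 | len_gt2].
  by have := sum_len_outside (negbT (in_set0 s)); rewrite cards0 big_set0 lamvu; lia.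
have [q qC pathC] := cycle_path_free (cycleC s) len_gt2.
have fst_inj := cycle_fst_inj (cycleC s) len_gt2.
have parity_s : parity s = fst @: C s by apply: odd_pairs_inj.
have card_parity_s : #|parity s| = len s.
  by rewrite parity_s card_in_imset // (cycle_card (cycleC s)).
have card_Q : #|parity s :\ q| = (len s).-1.
  by have := cardsD1 q (parity s); rewrite parity_s qC -parity_s card_parity_s add1n => ->.
have evenQ (S : {set 'I_n}) : S \subset [set~ s] -> xorsum parity S \subset parity s :\ q ->
    xorsum parity S = set0.
  by move=> _ sSQ; apply: pathC; [rewrite -parity_s | exact: xorsum_parity_even].
have [K sK bound] := xorsum_subfamily_bound (xorsum_parity_setC1 s lam_even) (subD1set _ _) evenQ.
have sK' : s \notin K by apply/negP => /(subsetP sK); rewrite !inE eqxx.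
have le_parity : \sum_(i in K) #|odd_pairs (C i)| <= \sum_(i in K) len i.
  apply: leq_sum => i _; rewrite -(cycle_card (cycleC i)).
  exact: leq_trans (subset_leq_card (odd_pairs_sub _)) (leq_imset_card _ _).
have := leq_trans bound (leq_add le_parity (leqnn _)); rewrite card_Q card_parity_s.
have := subset_leq_card sK; rewrite cardsC1 card_ord.
have := sum_len_outside sK'; rewrite lamvu.
by move: #|K| (\sum_(i in K) len i) => k B; lia.
Qed.

End Decomposition.

Theorem theorem2 (lam v u : nat) (M : seq nat) :
  0 < lam -> 0 < v -> 0 < u ->
  sorted leq M -> all (fun m => ~~ odd m) M ->
  cycle_decomposition v u lam M ->
  [/\ last 0 M <= 2 * minn v u,
      (lam * v) %% 2 = 0 /\ (lam * u) %% 2 = 0,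
      ~~ odd lam -> size M + last 0 M <= lam %/ 2 * v * u + 2
    & odd lam -> 2 * nu 2 M <= (lam - 1) * v * u].
Proof.
move=> lam_gt0 v_gt0 u_gt0 _ _ [C [disjC [coverC cycleC]]].
have [i0 _] := coverC ((Ordinal v_gt0, Ordinal u_gt0), Ordinal lam_gt0).
have last_lt : (size M).-1 < size M by rewrite ltn_predL (leq_ltn_trans _ (ltn_ord i0)).
pose t : 'I_(size M) := Ordinal last_lt.
rewrite -nth_last -[(size M).-1]/(nat_of_ord t); split.
- exact: cycle_length_le (cycleC t).
- have := even_degree disjC coverC cycleC (inl (Ordinal v_gt0)).
  have := even_degree disjC coverC cycleC (inr (Ordinal u_gt0)).
  by rewrite card_star_inl card_star_inr !modn2 => /negbTE-> /negbTE->.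
- exact: size_add_len_le disjC coverC cycleC t.
- exact: nu2_bound disjC coverC cycleC.
Qed.
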